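(* The number of cycles of the Collatz map $T$ contained in the positive integers (including the trivial cycle $\{1,2\}$) is bounded above by the index \[ \operatorname{ind}(Id-\mathcal{T})=\dim\operatorname{Ker}(Id-\mathcal{T})-\dim\operatorname{Ker}(Id-\mathcal{T})^* \] of the operator $Id-\mathcal{T}\in\mathcal{L}(H^2(D))$.
   Context: $T:\mathbb{Z}\to\mathbb{Z}$ is the Collatz map $T(n)=\frac{3n+1}2$ ($n$ odd), $T(n)=\frac n2$ ($n$ even); a cycle is a finite set $\{n_1,\dots,n_k\}$ with $T(n_i)=n_{i+1}$, $T(n_k)=n_1$. $D$ is the open unit disk and $H^2(D)$ the Hardy space of holomorphic $\sum a_nz^n$ on $D$ with $\sum|a_n|^2<\infty$. $\mathcal{T}\in\mathcal{L}(H^2(D))$ is given by $\mathcal{T}\big(\sum_{n\ge0}a_nz^n\big)=\sum_{n\ge0}a_nz^{T(n)}$, and $(Id-\mathcal{T})^*$ is the Hilbert-space adjoint. If $\dim\operatorname{Ker}(Id-\mathcal{T})=\infty$ the index is interpreted as $+\infty$. *)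

From Stdlib Require Import Reals ZArith List.
From Coquelicot Require Import Coquelicot.

Notation CC := Complex.C.
Local Open Scope C_scope.

Definition T (n : Z) : Z :=
  if Z.odd n then ((3 * n + 1) / 2)%Z else (n / 2)%Z.

(** A cycle of T, given by a (nonempty) listing [n_1; ...; n_k] with
    T n_i = n_{i+1} and T n_k = n_1.  The cycle itself is the set of
    elements of the list. *)
Definition is_cycle (l : list Z) : Prop :=
  l <> nil /\
  forall i, (i < length l)%nat ->
    T (nth i l 0%Z) = nth ((i + 1) mod length l) l 0%Z.

Definition positive_cycle (l : list Z) : Prop :=
  is_cycle l /\ List.Forall (fun n => (0 < n)%Z) l.

Definition same_cycle (l1 l2 : list Z) : Prop :=
  forall x, In x l1 <-> In x l2.

(** H^2(D) is modelled by its Taylor coefficient sequences: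
    f = sum a_n z^n is in H^2 iff sum |a_n|^2 < oo. *)
Definition H2 (a : nat -> CC) : Prop :=
  ex_series (fun n => (Cmod (a n) ^ 2)%R).

(** The operator calT: sum a_n z^n |-> sum a_n z^{T n}.  The coefficient
    of z^m in the image is the sum of a_n over n with T n = m; every such
    n satisfies n <= 2m, so this is a finite sum. *)
Fixpoint sum_upto (f : nat -> CC) (N : nat) : CC :=
  match N with
  | O => f O
  | S N' => sum_upto f N' + f N
  end.

Definition calT (a : nat -> CC) (m : nat) : CC :=
  sum_upto (fun n => if Z.eqb (T (Z.of_nat n)) (Z.of_nat m) then a n else 0)
           (2 * m).

Definition IdmT (a : nat -> CC) (m : nat) : CC := a m - calT a m.

(** B is the Hilbert-space adjoint of A on H^2 (inner product
    <f, g> = sum_n f_n * conj (g_n)): B maps H^2 to H^2 and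
    <A a, b> = <a, B b> for all a, b in H^2. *)
Definition is_adjoint (A B : (nat -> CC) -> (nat -> CC)) : Prop :=
  forall a b, H2 a -> H2 b ->
    H2 (B b) /\
    exists l : CC,
      is_series (fun n => A a n * Cconj (b n)) l /\
      is_series (fun n => a n * Cconj (B b n)) l.

Definition Ker (A : (nat -> CC) -> (nat -> CC)) (a : nat -> CC) : Prop :=
  H2 a /\ forall m, A a m = 0.

Fixpoint lincomb (k : nat) (c : nat -> CC) (v : nat -> nat -> CC) (j : nat) : CC :=
  match k with
  | O => 0
  | S k' => lincomb k' c v j + c k' * v k' j
  end.

Definition lin_indep (k : nat) (v : nat -> nat -> CC) : Prop :=
  forall c : nat -> CC,
    (forall j, lincomb k c v j = 0) -> forall i, (i < k)%nat -> c i = 0.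

Definition dim_ge (V : (nat -> CC) -> Prop) (k : nat) : Prop :=
  exists v : nat -> nat -> CC,
    (forall i, (i < k)%nat -> V (v i)) /\ lin_indep k v.

Definition dim_eq (V : (nat -> CC) -> Prop) (k : nat) : Prop :=
  dim_ge V k /\ ~ dim_ge V (S k).

Definition dim_infinite (V : (nat -> CC) -> Prop) : Prop :=
  forall k, dim_ge V k.

(* For a listing l of a cycle, the vector of occurrence counts of l is fixed by calT:
   calT is linear and sends e_j to e_(T j), so it maps the count vector of l to that of
   map T l, which is a rotation of l.  Distinct cycles are disjoint, so k positive cycles
   together with the fixed point 0 give k + 1 independent vectors of Ker (Id - calT).
   On the adjoint side, <(Id - calT) e_j, b> = conj (b_j) - conj (b_(T j)) shows that every
   b in Ker (Id - calT)^* satisfies b_j = b_(T j) = b_(2j) = b_(4j) = ..., which square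
   summability only allows for b_j = 0 when j > 0; hence that kernel is spanned by e_0. *)

From Stdlib Require Import Reals ZArith List Lia Lra Classical Permutation.
From Coquelicot Require Import Coquelicot.
Local Open Scope C_scope.

(* [ring] does not see through Coquelicot's structure projections (e.g. the type of
   [sum_n] results), so the equation is first retyped at [CC]. *)
Ltac Cring := match goal with |- ?a = ?b => change (@eq CC a b); ring end.

Lemma T_nonneg_half_le (z : Z) : (0 <= z)%Z -> (0 <= T z /\ z <= 2 * T z)%Z.
Proof.
  intros Hz. unfold T. destruct (Z.odd z) eqn:Hodd.
  - apply Z.odd_spec in Hodd as [b ->]. Z.to_euclidean_division_equations. lia.
  - rewrite <- Z.negb_even in Hodd. apply Bool.negb_false_iff, Z.even_spec in Hodd as [b ->].
    Z.to_euclidean_division_equations. lia.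
Qed.

Lemma T_double (z : Z) : T (2 * z) = z.
Proof.
  unfold T. rewrite Z.odd_mul, Bool.andb_false_l, (Z.mul_comm 2). apply Z.div_mul. discriminate.
Qed.

Definition Tnat (j : nat) : nat := Z.to_nat (T (Z.of_nat j)).

Lemma Tnat_double (j : nat) : Tnat (2 * j) = j.
Proof. unfold Tnat. rewrite Nat2Z.inj_mul, T_double. apply Nat2Z.id. Qed.

Lemma Tnat_eq0 (j : nat) : Tnat j = 0%nat <-> j = 0%nat.
Proof.
  unfold Tnat. destruct (T_nonneg_half_le (Z.of_nat j)); [lia|].
  split; intros Hj; [lia|subst; reflexivity].
Qed.

Lemma is_series_C_unique (a : nat -> CC) (x y : CC) :
  is_series a x -> is_series a y -> x = y.
Proof. intros Hx Hy. exact (filterlim_locally_unique (F := eventually) _ _ _ Hx Hy). Qed.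

Definition unit_vec (j : nat) (n : nat) : CC := if Nat.eqb n j then 1 else 0.

Lemma is_series_finite_support {K : AbsRing} {V : NormedModule K} (a : nat -> V) (N : nat) :
  (forall n, (N < n)%nat -> a n = zero) -> is_series a (sum_n a N).
Proof.
  intros Ha. apply filterlim_ext_loc with (fun _ => sum_n a N); [|apply filterlim_const].
  exists N. intros n Hn. induction Hn as [|n Hn IH]; [reflexivity|].
  rewrite sum_Sn, <- IH, Ha by lia. symmetry. apply plus_zero_r.
Qed.

Lemma sum_upto_sum_n (f : nat -> CC) (N : nat) : sum_upto f N = sum_n f N.
Proof.
  induction N as [|N IH]; simpl; [now rewrite sum_O|].
  now rewrite sum_Sn, IH.
Qed.

Lemma sum_n_unit_vec_mul (j N : nat) (x : nat -> CC) :
  sum_n (fun n => unit_vec j n * x n) N = (if Nat.leb j N then x j else 0 : CC).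
Proof.
  induction N as [|N IH].
  - rewrite sum_O. unfold unit_vec. destruct j; simpl; ring.
  - rewrite sum_Sn, IH. change plus with Cplus. unfold unit_vec.
    destruct (Nat.eqb_spec (S N) j);
      destruct (Nat.leb_spec j N); destruct (Nat.leb_spec j (S N)); try lia; subst; Cring.
Qed.

Lemma is_series_unit_vec_mul (j : nat) (x : nat -> CC) :
  is_series (fun n => unit_vec j n * x n) (x j).
Proof.
  replace (x j) with (sum_n (fun n => unit_vec j n * x n) j)
    by now rewrite sum_n_unit_vec_mul, Nat.leb_refl.
  apply (is_series_finite_support (V := C_NormedModule)). intros n Hn. unfold unit_vec.
  destruct (Nat.eqb_spec n j); [lia|]. change (0 * x n = 0). ring.
Qed.

Lemma H2_finite_support (a : nat -> CC) (N : nat) :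
  (forall n, (N < n)%nat -> a n = 0) -> H2 a.
Proof.
  intros Ha. eexists. apply (is_series_finite_support _ N).
  intros n Hn. rewrite Ha, Cmod_0 by exact Hn. apply pow_i. lia.
Qed.

Lemma H2_unit_vec (j : nat) : H2 (unit_vec j).
Proof.
  apply (H2_finite_support _ j). intros n Hn. unfold unit_vec.
  destruct (Nat.eqb_spec n j); [lia|reflexivity].
Qed.

Lemma T_eqb_Tnat (n m : nat) : Z.eqb (T (Z.of_nat n)) (Z.of_nat m) = Nat.eqb (Tnat n) m.
Proof.
  unfold Tnat. destruct (T_nonneg_half_le (Z.of_nat n)); [lia|].
  destruct (Z.eqb_spec (T (Z.of_nat n)) (Z.of_nat m)), (Nat.eqb_spec (Z.to_nat (T (Z.of_nat n))) m);
    auto; lia.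
Qed.

Lemma calT_ext (a b : nat -> CC) (m : nat) : (forall n, a n = b n) -> calT a m = calT b m.
Proof.
  intros Hab. unfold calT. rewrite !sum_upto_sum_n. apply sum_n_ext. intros n. now rewrite Hab.
Qed.

Lemma calT_add (a b : nat -> CC) (m : nat) :
  calT (fun n => a n + b n) m = calT a m + calT b m.
Proof.
  unfold calT. rewrite !sum_upto_sum_n.
  change (sum_n ?f ?N + sum_n ?g ?N) with (plus (sum_n f N) (sum_n g N)).
  rewrite <- sum_n_plus. apply sum_n_ext. intros n.
  change plus with Cplus. destruct (Z.eqb _ _); Cring.
Qed.

Lemma calT_unit_vec (j m : nat) : calT (unit_vec j) m = unit_vec (Tnat j) m.
Proof.
  unfold calT. rewrite sum_upto_sum_n.
  rewrite (sum_n_ext _ (fun n => unit_vec j n * unit_vec m (Tnat n))).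
  - rewrite sum_n_unit_vec_mul. unfold unit_vec.
    destruct (Nat.leb_spec j (2 * m)); [now rewrite Nat.eqb_sym|].
    destruct (Nat.eqb_spec m (Tnat j)); [|reflexivity].
    unfold Tnat in *. destruct (T_nonneg_half_le (Z.of_nat j)); lia.
  - intros n. rewrite T_eqb_Tnat. unfold unit_vec.
    destruct (Tnat n =? m)%nat, (n =? j)%nat; Cring.
Qed.

Lemma IdmT_unit_vec (j n : nat) : IdmT (unit_vec j) n = unit_vec j n - unit_vec (Tnat j) n.
Proof. unfold IdmT. now rewrite calT_unit_vec. Qed.

Lemma lincomb_ext (k : nat) (c c' : nat -> CC) (v : nat -> nat -> CC) (j : nat) :
  (forall i, (i < k)%nat -> c i = c' i) -> lincomb k c v j = lincomb k c' v j.
Proof.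
  induction k as [|k IH]; intros Hc; simpl; [reflexivity|].
  rewrite IH, Hc by auto. reflexivity.
Qed.

Lemma lincomb_eq0 (k : nat) (c : nat -> CC) (v : nat -> nat -> CC) (j : nat) :
  (forall i, (i < k)%nat -> v i j = 0) -> lincomb k c v j = 0.
Proof.
  induction k as [|k IH]; intros Hv; simpl; [reflexivity|].
  rewrite IH, Hv by auto. ring.
Qed.

Lemma lincomb_single (k : nat) (c : nat -> CC) (v : nat -> nat -> CC) (j i0 : nat) :
  (i0 < k)%nat -> (forall i, (i < k)%nat -> i <> i0 -> v i j = 0) ->
  lincomb k c v j = c i0 * v i0 j.
Proof.
  induction k as [|k IH]; intros Hi0 Hv; simpl; [lia|].
  destruct (Nat.eq_dec i0 k) as [->|Hne].
  - rewrite lincomb_eq0; [ring|]. intros i Hi. apply Hv; lia.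
  - rewrite IH, (Hv k) by (auto; lia). ring.
Qed.

Lemma lin_indep_of_witnesses (k : nat) (v : nat -> nat -> CC) (w : nat -> nat) :
  (forall i, (i < k)%nat -> v i (w i) <> 0) ->
  (forall i i', (i < k)%nat -> (i' < k)%nat -> i' <> i -> v i' (w i) = 0) ->
  lin_indep k v.
Proof.
  intros Hown Hother c Hc i Hi.
  pose proof (Hc (w i)) as Hzero.
  rewrite (lincomb_single k c v (w i) i Hi (fun i' Hi' Hne => Hother i i' Hi Hi' Hne)) in Hzero.
  destruct (Ceq_dec (c i) 0) as [|Hci]; [assumption|].
  destruct (Cmult_neq_0 _ _ Hci (Hown i Hi) Hzero).
Qed.

Lemma dim_ge_0 (V : (nat -> CC) -> Prop) : dim_ge V 0.
Proof. exists (fun _ _ => 0). split; [intros i Hi|intros c _ i Hi]; lia. Qed.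

Lemma lincomb_pad (k k' : nat) (c : nat -> CC) (v : nat -> nat -> CC) (j : nat) :
  (k' <= k)%nat -> lincomb k (fun i => if Nat.ltb i k' then c i else 0) v j = lincomb k' c v j.
Proof.
  induction 1 as [|k Hle IH].
  - apply lincomb_ext. intros i Hi. now rewrite (proj2 (Nat.ltb_lt _ _) Hi).
  - simpl. rewrite IH, (proj2 (Nat.ltb_ge _ _) Hle). ring.
Qed.

Lemma dim_ge_le (V : (nat -> CC) -> Prop) (k k' : nat) :
  dim_ge V k -> (k' <= k)%nat -> dim_ge V k'.
Proof.
  intros [v [HV Hindep]] Hle. exists v. split; [intros i Hi; apply HV; lia|].
  intros c Hc i Hi.
  assert (Hpad := Hindep (fun i => if Nat.ltb i k' then c i else 0)
                    (fun j => eq_trans (lincomb_pad k k' c v j Hle) (Hc j)) i ltac:(lia)).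
  cbv beta in Hpad. now rewrite (proj2 (Nat.ltb_lt _ _) Hi) in Hpad.
Qed.

Lemma dim_eq_of_not_dim_infinite (V : (nat -> CC) -> Prop) :
  ~ dim_infinite V -> exists n, dim_eq V n.
Proof.
  intros Hfin. apply not_all_ex_not in Hfin as [K HK].
  induction K as [|K IH]; [now destruct (HK (dim_ge_0 V))|].
  destruct (classic (dim_ge V K)) as [HgeK|HnK].
  - now exists K.
  - exact (IH HnK).
Qed.

Lemma dim_ge_le_dim_eq (V : (nat -> CC) -> Prop) (n k : nat) :
  dim_eq V n -> dim_ge V k -> (k <= n)%nat.
Proof.
  intros [_ Hn] Hk. destruct (Nat.le_gt_cases k n) as [|Hgt]; [assumption|].
  exfalso. apply Hn, (dim_ge_le V k); [exact Hk|lia].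
Qed.

Lemma not_dim_ge_2_of_supported_at_0 (V : (nat -> CC) -> Prop) :
  (forall a j, V a -> j <> 0%nat -> a j = 0) -> ~ dim_ge V 2.
Proof.
  intros Hsupp [v [HV Hindep]].
  assert (Hv : forall i j, (i < 2)%nat -> j <> 0%nat -> v i j = 0)
    by (intros i j Hi Hj; apply Hsupp; auto).
  (* v1(0) v0 - v0(0) v1 vanishes at 0 by construction, and elsewhere by support *)
  assert (Hv00 : v 0%nat 0%nat = 0).
  { set (c := fun i => match i with O => v 1%nat 0%nat | _ => - v 0%nat 0%nat end).
    assert (Hc : forall j, lincomb 2 c v j = 0).
    { intros [|j]; simpl; [ring|]. rewrite (Hv 0%nat (S j)), (Hv 1%nat (S j)) by lia. ring. }
    transitivity (- c 1%nat); [unfold c; ring|].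
    rewrite (Hindep c Hc 1%nat) by lia. ring. }
  assert (Hc : forall j, lincomb 2 (fun i => match i with O => 1 | _ => 0 end) v j = 0).
  { intros [|j]; simpl; [rewrite Hv00; ring|].
    rewrite (Hv 0%nat (S j)), (Hv 1%nat (S j)) by lia. ring. }
  apply C1_nz. exact (Hindep _ Hc 0%nat ltac:(lia)).
Qed.

Lemma Cconj_inj (x y : CC) : Cconj x = Cconj y -> x = y.
Proof. intros Hxy. now rewrite <- (Cconj_conj x), Hxy, Cconj_conj. Qed.

Lemma H2_frequent_value_eq0 (a : nat -> CC) (x : CC) :
  H2 a -> (forall N, exists n, (N <= n)%nat /\ a n = x) -> x = 0.
Proof.
  intros Ha Hfreq. destruct (Ceq_dec x 0) as [|Hx]; [assumption|exfalso].
  assert (Hpos : (0 < Cmod x ^ 2)%R) by (apply pow_lt, Cmod_gt_0, Hx).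
  apply ex_series_lim_0, is_lim_seq_spec in Ha.
  destruct (Ha (mkposreal _ Hpos)) as [N HN].
  destruct (Hfreq N) as [n [Hn Hax]].
  specialize (HN n Hn). simpl in HN. rewrite Hax, Rminus_0_r, Rabs_pos_eq in HN by lra.
  lra.
Qed.

Section AdjointKernel.

Variable B : (nat -> CC) -> (nat -> CC).
Hypothesis hB : is_adjoint IdmT B.

Lemma adjoint_IdmT_coeff (b : nat -> CC) (j : nat) : H2 b -> B b j = b j - b (Tnat j).
Proof.
  intros Hb. destruct (hB (unit_vec j) b (H2_unit_vec j) Hb) as [_ [l [HA HB]]].
  assert (HA' : is_series (fun n => IdmT (unit_vec j) n * Cconj (b n))
                       (Cconj (b j) - Cconj (b (Tnat j)))).
  { eapply is_series_ext;
      [|exact (is_series_minus _ _ _ _ (is_series_unit_vec_mul j (fun n => Cconj (b n)))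
                                       (is_series_unit_vec_mul (Tnat j) (fun n => Cconj (b n))))].
    intros n. rewrite IdmT_unit_vec. change plus with Cplus. change opp with Copp. Cring. }
  apply Cconj_inj. rewrite Cminus_conj.
  rewrite <- (is_series_C_unique _ _ _ HB (is_series_unit_vec_mul j (fun n => Cconj (B b n)))).
  exact (is_series_C_unique _ _ _ HA HA').
Qed.

Lemma adjoint_Ker_Tnat_invariant (b : nat -> CC) (j : nat) : Ker B b -> b j = b (Tnat j).
Proof.
  intros [Hb HBb]. pose proof (adjoint_IdmT_coeff b j Hb) as Hcoeff.
  rewrite HBb in Hcoeff. apply (f_equal (fun z => z + b (Tnat j))) in Hcoeff.
  ring_simplify in Hcoeff. now rewrite Hcoeff.
Qed.

Lemma adjoint_Ker_supported_at_0 (b : nat -> CC) (j : nat) : Ker B b -> j <> 0%nat -> b j = 0.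
Proof.
  intros Hker Hj.
  (* b is constant along the T-backward orbit j, 2j, 4j, ..., which escapes to infinity *)
  assert (Hdouble : forall t, b (2 ^ t * j)%nat = b j).
  { induction t as [|t IH]; [now rewrite Nat.mul_1_l|].
    rewrite (adjoint_Ker_Tnat_invariant b _ Hker), Nat.pow_succ_r', <- Nat.mul_assoc.
    now rewrite Tnat_double. }
  apply (H2_frequent_value_eq0 b); [apply Hker|].
  intros N. exists (2 ^ N * j)%nat. split; [|apply Hdouble].
  pose proof (Nat.pow_gt_lin_r 2 N ltac:(lia)). nia.
Qed.

Lemma unit_vec_0_adjoint_Ker : Ker B (unit_vec 0).
Proof.
  split; [apply H2_unit_vec|]. intros m.
  rewrite (adjoint_IdmT_coeff _ m (H2_unit_vec 0)). unfold unit_vec.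
  destruct (Nat.eqb_spec m 0), (Nat.eqb_spec (Tnat m) 0); try ring;
    rewrite Tnat_eq0 in *; contradiction.
Qed.

Lemma adjoint_Ker_dim_eq_1 : dim_eq (Ker B) 1.
Proof.
  split.
  - exists (fun _ => unit_vec 0). split; [intros; apply unit_vec_0_adjoint_Ker|].
    apply lin_indep_of_witnesses with (w := fun _ => 0%nat); [|lia].
    intros i _. exact C1_nz.
  - apply not_dim_ge_2_of_supported_at_0. intros a j Ha Hj.
    exact (adjoint_Ker_supported_at_0 a j Ha Hj).
Qed.

End AdjointKernel.

(* Occurrence counts rather than an indicator: a listing may run through its cycle
   several times. *)
Definition occ (l : list Z) (m : nat) : CC := RtoC (INR (count_occ Z.eq_dec l (Z.of_nat m))).

Lemma occ_eq0_iff (l : list Z) (x : Z) : (0 <= x)%Z -> occ l (Z.to_nat x) = 0 <-> ~ In x l.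
Proof.
  intros Hx. unfold occ. rewrite Z2Nat.id, (count_occ_not_In Z.eq_dec) by exact Hx.
  split; intros H.
  - apply INR_eq. now injection H.
  - now rewrite H.
Qed.

Lemma occ_cons (x : Z) (l : list Z) (m : nat) :
  (0 <= x)%Z -> occ (x :: l) m = unit_vec (Z.to_nat x) m + occ l m.
Proof.
  intros Hx. unfold occ, unit_vec. simpl count_occ.
  destruct (Z.eq_dec x (Z.of_nat m)), (Nat.eqb_spec m (Z.to_nat x)); try lia.
  - rewrite S_INR, RtoC_plus. ring.
  - ring.
Qed.

Lemma H2_occ (l : list Z) : H2 (occ l).
Proof.
  apply (H2_finite_support _ (list_max (map Z.to_nat l))). intros n Hn.
  unfold occ. rewrite (proj1 (count_occ_not_In _ _ _)); [reflexivity|]. intros Hin.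
  pose proof (proj1 (list_max_le (map Z.to_nat l) _) (Nat.le_refl _)) as Hmax.
  rewrite Forall_forall in Hmax. apply (in_map Z.to_nat), Hmax in Hin.
  rewrite Nat2Z.id in Hin. lia.
Qed.

Lemma calT_occ (l : list Z) (m : nat) :
  List.Forall (fun x => (0 <= x)%Z) l -> calT (occ l) m = occ (map T l) m.
Proof.
  induction 1 as [|x l Hx Hl IH].
  - unfold calT, occ. generalize (2 * m)%nat as N.
    induction N as [|N IHN]; simpl in *; [|rewrite IHN];
      match goal with |- context [if ?b then _ else _] => destruct b end; ring.
  - rewrite (calT_ext _ (fun n => unit_vec (Z.to_nat x) n + occ l n))
      by (intros; now apply occ_cons).
    rewrite calT_add, calT_unit_vec, IH. simpl map.
    destruct (T_nonneg_half_le x Hx). rewrite occ_cons by assumption.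
    unfold Tnat. now rewrite Z2Nat.id.
Qed.

Lemma map_T_cycle (x : Z) (l : list Z) : is_cycle (x :: l) -> map T (x :: l) = l ++ x :: nil.
Proof.
  intros [_ Hc]. apply nth_ext with (d := T 0%Z) (d' := 0%Z).
  - rewrite length_map, length_app. simpl. lia.
  - intros n Hn. rewrite length_map in Hn. rewrite map_nth, Hc by exact Hn.
    simpl length in *. destruct (Nat.eq_dec n (length l)) as [->|Hne].
    + rewrite app_nth2, Nat.sub_diag, Nat.add_1_r, Nat.Div0.mod_same by lia. reflexivity.
    + rewrite app_nth1, Nat.mod_small, Nat.add_1_r by lia. reflexivity.
Qed.

Lemma Ker_IdmT_occ (l : list Z) :
  is_cycle l -> List.Forall (fun x => (0 <= x)%Z) l -> Ker IdmT (occ l).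
Proof.
  intros Hcyc Hnonneg. split; [apply H2_occ|]. intros m.
  assert (Hperm : Permutation l (map T l)).
  { destruct l as [|x l]; [now destruct Hcyc|].
    rewrite map_T_cycle by exact Hcyc. apply Permutation_cons_append. }
  unfold IdmT. rewrite calT_occ by exact Hnonneg. unfold occ.
  rewrite <- (proj1 (Permutation_count_occ Z.eq_dec _ _) Hperm). ring.
Qed.

Lemma cycle_iter_nth (l : list Z) (a t : nat) : is_cycle l -> (a < length l)%nat ->
  Nat.iter t T (nth a l 0%Z) = nth ((a + t) mod length l) l 0%Z.
Proof.
  intros [Hne Hc] Ha. induction t as [|t IH]; simpl.
  - now rewrite Nat.add_0_r, Nat.mod_small.
  - rewrite IH, Hc, Nat.Div0.add_mod_idemp_l by (apply Nat.mod_upper_bound; lia).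
    f_equal. f_equal. lia.
Qed.

Lemma cycle_In_iff_orbit (l : list Z) (x y : Z) : is_cycle l -> In x l ->
  In y l <-> exists t, y = Nat.iter t T x.
Proof.
  intros Hcyc Hx. destruct (In_nth l x 0%Z Hx) as [a [Ha <-]].
  split.
  - intros Hy. destruct (In_nth l y 0%Z Hy) as [b [Hb <-]].
    exists (b + length l - a)%nat. rewrite cycle_iter_nth by assumption.
    replace (a + (b + length l - a))%nat with (b + 1 * length l)%nat by lia.
    now rewrite Nat.Div0.mod_add, Nat.mod_small.
  - intros [t ->]. rewrite cycle_iter_nth by assumption.
    apply nth_In, Nat.mod_upper_bound. lia.
Qed.

Lemma same_cycle_of_common_point (l1 l2 : list Z) (x : Z) :
  is_cycle l1 -> is_cycle l2 -> In x l1 -> In x l2 -> same_cycle l1 l2.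
Proof.
  intros H1 H2 Hx1 Hx2 y. now rewrite (cycle_In_iff_orbit l1 x y), (cycle_In_iff_orbit l2 x y).
Qed.

Lemma Ker_IdmT_dim_ge (k : nat) (c : nat -> list Z) :
  (forall i, (i < k)%nat -> is_cycle (c i) /\ List.Forall (fun x => (0 <= x)%Z) (c i)) ->
  (forall i j, (i < k)%nat -> (j < k)%nat -> i <> j -> ~ same_cycle (c i) (c j)) ->
  dim_ge (Ker IdmT) k.
Proof.
  intros hc hdist. exists (fun i => occ (c i)). split.
  { intros i Hi. apply Ker_IdmT_occ; apply hc, Hi. }
  set (w := fun i => hd 0%Z (c i)).
  assert (Hw : forall i, (i < k)%nat -> In (w i) (c i) /\ (0 <= w i)%Z).
  { intros i Hi. destruct (hc i Hi) as [[Hne _] Hnonneg]. unfold w.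
    destruct (c i) as [|x l]; [contradiction|]. split; [now left|now inversion Hnonneg]. }
  (* distinct cycles are disjoint, so w i lies on the i-th cycle only *)
  apply lin_indep_of_witnesses with (w := fun i => Z.to_nat (w i)).
  - intros i Hi. destruct (Hw i Hi) as [Hin Hnonneg].
    rewrite (occ_eq0_iff _ _ Hnonneg). tauto.
  - intros i i' Hi Hi' Hne. destruct (Hw i Hi) as [Hin Hnonneg].
    apply (occ_eq0_iff _ _ Hnonneg). intros Hin'.
    apply (hdist i i' Hi Hi' (not_eq_sym Hne)).
    apply (same_cycle_of_common_point _ _ (w i)); try apply hc; assumption.
Qed.

Lemma Ker_IdmT_dim_ge_succ (k : nat) (c : nat -> list Z) :
  (forall i, (i < k)%nat -> positive_cycle (c i)) ->
  (forall i j, (i < k)%nat -> (j < k)%nat -> i <> j -> ~ same_cycle (c i) (c j)) ->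
  dim_ge (Ker IdmT) (S k).
Proof.
  intros hc hdist.
  (* the fixed point 0 adds the cycle [0] to the positive ones *)
  set (c' := fun i => if Nat.ltb i k then c i else (0%Z :: nil)).
  assert (Hzero_not_In : forall i, (i < k)%nat -> ~ In 0%Z (c i)).
  { intros i Hi Hin. destruct (hc i Hi) as [_ Hpos].
    rewrite Forall_forall in Hpos. specialize (Hpos _ Hin). lia. }
  apply (Ker_IdmT_dim_ge (S k) c').
  - intros i Hi. unfold c'. destruct (Nat.ltb_spec i k) as [Hik|Hik].
    + destruct (hc i Hik) as [Hcyc Hpos]. split; [exact Hcyc|].
      eapply Forall_impl; [|exact Hpos]. simpl. lia.
    + split; [split; [discriminate|]|constructor; [lia|constructor]].
      intros [|i'] Hi'; [reflexivity|simpl in Hi'; lia].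
  - intros i j Hi Hj Hij. unfold c'.
    destruct (Nat.ltb_spec i k), (Nat.ltb_spec j k); try lia.
    + now apply hdist.
    + intros Hsame. apply (Hzero_not_In i); [assumption|]. apply Hsame. now left.
    + intros Hsame. apply (Hzero_not_In j); [assumption|]. apply Hsame. now left.
Qed.

Theorem mainTheorem8
  (B : (nat -> CC) -> (nat -> CC)) (hB : is_adjoint IdmT B)
  (k : nat) (c : nat -> list Z)
  (hc : forall i, (i < k)%nat -> positive_cycle (c i))
  (hd : forall i j, (i < k)%nat -> (j < k)%nat -> i <> j -> ~ same_cycle (c i) (c j)) :
  dim_infinite (Ker IdmT) \/
  exists n m : nat,
    dim_eq (Ker IdmT) n /\ dim_eq (Ker B) m /\ (k + m <= n)%nat.
Proof.
  destruct (classic (dim_infinite (Ker IdmT))) as [Hinf|Hfin]; [now left|right].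
  destruct (dim_eq_of_not_dim_infinite _ Hfin) as [n Hn].
  exists n, 1%nat. split; [exact Hn|]. split; [exact (adjoint_Ker_dim_eq_1 B hB)|].
  rewrite Nat.add_1_r. exact (dim_ge_le_dim_eq _ _ _ Hn (Ker_IdmT_dim_ge_succ k c hc hd)).
Qed.
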